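(* Let $1<\theta<e^3$ with $\log\theta$ irrational, and let $a_k,B_k,\lambda_k$ be associated to the simple continued fraction of $2/\log\theta$. For each $n\in\mathcal A_\theta$ there exist positive integers $c,k$ such that $n=cB_{2k-1}$ and $\lambda_{2k}>\frac{6c^2}{\log\theta}$.
   Context: $\log$ is the natural logarithm; $M'_\theta(n)=\left\lfloor 1/(\theta^{1/n}-1)\right\rfloor$ and $\mathcal A_\theta=\{n\in\mathbb N: M'_\theta(n)\neq \lfloor n/\log\theta-1/2\rfloor\}$. For an irrational $\alpha=[a_0;a_1,a_2,\dots]$ (simple continued fraction, $a_0\in\mathbb Z$, $a_k\ge1$ for $k\ge1$), $A_k/B_k=[a_0;a_1,\dots,a_k]$ is the $k$th convergent in lowest terms with $B_k>0$, and $\lambda_k=[0;a_{k-1},a_{k-2},\dots,a_1]+[a_k;a_{k+1},a_{k+2},\dots]$. *)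

From Stdlib Require Import Reals Lra ZArith List.
Open Scope R_scope.

Definition Rfloor (x : R) : Z := (up x - 1)%Z.

(* complete quotients alpha_k = [a_k; a_{k+1}, ...] of alpha:
   alpha_0 = alpha, alpha_{k+1} = 1 / (alpha_k - floor alpha_k) *)
Fixpoint cf_rem (alpha : R) (k : nat) : R :=
  match k with
  | O => alpha
  | S k' => / (cf_rem alpha k' - IZR (Rfloor (cf_rem alpha k')))
  end.

Definition cf_a (alpha : R) (k : nat) : Z := Rfloor (cf_rem alpha k).

(* (B_{k-1}, B_k) with B_{-1} = 0, B_0 = 1, B_k = a_k B_{k-1} + B_{k-2} *)
Fixpoint cf_Bpair (alpha : R) (k : nat) : Z * Z :=
  match k with
  | O => (0%Z, 1%Z)
  | S k' => let (p, q) := cf_Bpair alpha k' in (q, (cf_a alpha k * q + p)%Z)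
  end.

Definition cf_B (alpha : R) (k : nat) : Z := snd (cf_Bpair alpha k).

(* finite continued fraction [0; b_1, ..., b_m]  (= 0 for the empty list) *)
Definition fin_cf0 (l : list Z) : R :=
  fold_right (fun b acc => / (IZR b + acc)) 0 l.

(* lambda_k = [0; a_{k-1}, ..., a_1] + [a_k; a_{k+1}, ...] *)
Definition cf_lambda (alpha : R) (k : nat) : R :=
  fin_cf0 (map (cf_a alpha) (rev (seq 1 (k - 1)))) + cf_rem alpha k.

Definition Mprime (theta : R) (n : nat) : Z :=
  Rfloor (/ (Rpower theta (/ INR n) - 1)).

Definition in_A (theta : R) (n : nat) : Prop :=
  (1 <= n)%nat /\ Mprime theta n <> Rfloor (INR n / ln theta - / 2).

Definition irrational (x : R) : Prop :=
  forall p q : Z, q <> 0%Z -> x <> IZR p / IZR q.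

From Stdlib Require Import Reals Lra Lia ZArith List.
From Coquelicot Require Coquelicot.
Open Scope R_scope.

(* Put x = log(theta)/n and alpha = 2/log(theta).  The Pade-type bounds
   1/x - 1/2 < 1/(e^x - 1) < 1/x - 1/2 + x/12 show that n in A_theta means that some
   integer lies strictly between n/log(theta) - 1/2 and n/log(theta) - 1/2 + x/12, i.e.
   an odd integer p satisfies 0 < p - n alpha < log(theta)/(6n) < 1/(2n).  A one-sided
   Legendre argument then gives n = c B_j with j odd and p - n alpha = c/(B_j lambda_{j+1}),
   and comparing the two bounds yields lambda_{j+1} > 6c^2/log(theta). *)

Section ExpBounds.
Import Coquelicot.Coquelicot.

Lemma pos_of_deriv_pos (f f' : R -> R) :
  (forall x, derivable_pt_lim f x (f' x)) -> f 0 = 0 ->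
  (forall x, 0 < x -> 0 < f' x) -> forall x, 0 < x -> 0 < f x.
Proof.
  intros Hd Hf0 Hf' x Hx.
  set (pr := fun y => exist _ (f' y) (Hd y) : derivable_pt f y).
  destruct (MVT_cor1 f 0 x pr Hx) as [c [Hc Hcx]].
  change (derive_pt f c (pr c)) with (f' c) in Hc.
  assert (0 < f' c * (x - 0)) by (apply Rmult_lt_0_compat; [apply Hf'|]; lra).
  lra.
Qed.

(* The gaps between exp and its (1,1) and (2,2) Pade approximants. *)
Lemma exp_pade11_pos x : 0 < x -> 0 < exp x * (x - 2) + x + 2.
Proof.
  revert x; apply (pos_of_deriv_pos _ (fun x => exp x * (x - 1) + 1)).
  - intro y; apply is_derive_Reals; auto_derive; auto; ring.
  - rewrite exp_0; ring.
  - apply (pos_of_deriv_pos _ (fun x => x * exp x)).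
    + intro y; apply is_derive_Reals; auto_derive; auto; ring.
    + rewrite exp_0; ring.
    + intros y Hy; apply Rmult_lt_0_compat; [lra | apply exp_pos].
Qed.

Lemma exp_pade22_pos x :
  0 < x -> 0 < exp x * (x ^ 2 - 6 * x + 12) - (x ^ 2 + 6 * x + 12).
Proof.
  revert x; apply (pos_of_deriv_pos _ (fun x => exp x * (x ^ 2 - 4 * x + 6) - 2 * x - 6)).
  - intro y; apply is_derive_Reals; auto_derive; auto; ring.
  - rewrite exp_0; ring.
  - apply (pos_of_deriv_pos _ (fun x => exp x * (x ^ 2 - 2 * x + 2) - 2)).
    + intro y; apply is_derive_Reals; auto_derive; auto; ring.
    + rewrite exp_0; ring.
    + apply (pos_of_deriv_pos _ (fun x => exp x * x ^ 2)).
      * intro y; apply is_derive_Reals; auto_derive; auto; ring.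
      * rewrite exp_0; ring.
      * intros y Hy; apply Rmult_lt_0_compat; [apply exp_pos | nra].
Qed.

End ExpBounds.

Lemma inv_expm1_bounds x : 0 < x ->
  / x - / 2 < / (exp x - 1) < / x - / 2 + x / 12.
Proof.
  intros Hx.
  pose proof (exp_pade11_pos x Hx); pose proof (exp_pade22_pos x Hx).
  pose proof (exp_ineq1 x (Rgt_not_eq x 0 Hx)).
  set (E := exp x) in *.
  split; apply Rlt_0_minus; field_simplify; try lra; apply Rdiv_lt_0_compat; nra.
Qed.

Lemma Rfloor_spec z : IZR (Rfloor z) <= z < IZR (Rfloor z) + 1.
Proof.
  unfold Rfloor; destruct (archimed z); rewrite minus_IZR; lra.
Qed.

Lemma Rfloor_le z1 z2 : z1 <= z2 -> (Rfloor z1 <= Rfloor z2)%Z.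
Proof.
  intros Hz; pose proof (Rfloor_spec z1); pose proof (Rfloor_spec z2).
  assert (Hlt : IZR (Rfloor z1) < IZR (Rfloor z2 + 1)) by (rewrite plus_IZR; lra).
  apply lt_IZR in Hlt; lia.
Qed.

Lemma in_A_near_odd_integer theta n : 1 < theta -> in_A theta n ->
  exists m : Z, 0 < IZR (2 * m + 1) - INR n * (2 / ln theta) < ln theta / (6 * INR n).
Proof.
  intros Htheta [Hn HA]; unfold Mprime, Rpower in HA.
  assert (HL : 0 < ln theta) by (rewrite <- ln_1; apply ln_increasing; lra).
  assert (HnR : 1 <= INR n) by (apply (le_INR 1); lia).
  set (L := ln theta) in *; set (x := / INR n * L) in *.
  assert (Hx : 0 < x) by (unfold x; apply Rmult_lt_0_compat; [apply Rinv_0_lt_compat|]; lra).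
  replace (INR n / L - / 2) with (/ x - / 2) in HA by (unfold x; field; lra).
  destruct (inv_expm1_bounds x Hx) as [Hlow Hup].
  set (y := / (exp x - 1)) in *.
  pose proof (Rfloor_le _ _ (Rlt_le _ _ Hlow)).
  assert (Hgap : IZR (Rfloor (/ x - / 2) + 1) <= IZR (Rfloor y)) by (apply IZR_le; lia).
  rewrite plus_IZR in Hgap.
  pose proof (Rfloor_spec (/ x - / 2)); pose proof (Rfloor_spec y).
  exists (Rfloor y); rewrite plus_IZR, mult_IZR.
  replace (INR n * (2 / L)) with (2 * / x) by (unfold x; field; lra).
  replace (L / (6 * INR n)) with (x / 6) by (unfold x; field; lra).
  lra.
Qed.

(* Numerators of the convergents: (A_{k-1}, A_k) with A_{-1} = 1, A_0 = a_0. *)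
Fixpoint cf_Apair (alpha : R) (k : nat) : Z * Z :=
  match k with
  | O => (1%Z, cf_a alpha 0)
  | S k' => let (p, q) := cf_Apair alpha k' in (q, (cf_a alpha k * q + p)%Z)
  end.

Definition cf_A (alpha : R) (k : nat) : Z := snd (cf_Apair alpha k).
Definition cf_Aprev (alpha : R) (k : nat) : Z := fst (cf_Apair alpha k).
Definition cf_Bprev (alpha : R) (k : nat) : Z := fst (cf_Bpair alpha k).

(* [cf_den k] is the denominator of alpha = (A_k alpha_{k+1} + A_{k-1}) / (B_k alpha_{k+1} + B_{k-1}). *)
Definition cf_den (alpha : R) (k : nat) : R :=
  IZR (cf_B alpha k) * cf_rem alpha (S k) + IZR (cf_Bprev alpha k).
Definition cf_err (alpha : R) (k : nat) : R := IZR (cf_B alpha k) * alpha - IZR (cf_A alpha k).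

Section ContinuedFraction.
Variable al : R.

Lemma cf_A_S k : cf_A al (S k) = (cf_a al (S k) * cf_A al k + cf_Aprev al k)%Z.
Proof. unfold cf_A, cf_Aprev; simpl; destruct (cf_Apair al k); reflexivity. Qed.
Lemma cf_Aprev_S k : cf_Aprev al (S k) = cf_A al k.
Proof. unfold cf_A, cf_Aprev; simpl; destruct (cf_Apair al k); reflexivity. Qed.
Lemma cf_B_S k : cf_B al (S k) = (cf_a al (S k) * cf_B al k + cf_Bprev al k)%Z.
Proof. unfold cf_B, cf_Bprev; simpl; destruct (cf_Bpair al k); reflexivity. Qed.
Lemma cf_Bprev_S k : cf_Bprev al (S k) = cf_B al k.
Proof. unfold cf_B, cf_Bprev; simpl; destruct (cf_Bpair al k); reflexivity. Qed.

Lemma cf_det k : (cf_A al k * cf_Bprev al k - cf_Aprev al k * cf_B al k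
                  = if Nat.even k then -1 else 1)%Z.
Proof.
  induction k as [|k IH]; [cbn; ring|].
  rewrite cf_A_S, cf_Aprev_S, cf_B_S, cf_Bprev_S, Nat.even_succ, <- Nat.negb_even.
  destruct (Nat.even k); simpl; lia.
Qed.

Hypothesis Hal : irrational al.

Lemma irrational_cf_rem k : irrational (cf_rem al k).
Proof.
  induction k as [|k IH]; [exact Hal|].
  simpl; fold (cf_a al k).
  set (r := cf_rem al k) in *; set (f := cf_a al k).
  intros p q Hq Hrq.
  assert (Hrf : r - IZR f <> 0).
  { intro H0; apply (IH f 1%Z); [lia|]; unfold Rdiv; rewrite Rinv_1; lra. }
  assert (Hp : p <> 0%Z).
  { intros ->; rewrite Rdiv_0_l in Hrq; exact (Rinv_neq_0_compat _ Hrf Hrq). }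
  assert (IZR q <> 0) by (apply not_0_IZR; auto).
  assert (IZR p <> 0) by (apply not_0_IZR; auto).
  assert (Hfrac : r - IZR f = IZR q / IZR p).
  { rewrite <- (Rinv_inv (r - IZR f)), Hrq; field; auto. }
  apply (IH (f * p + q)%Z p Hp).
  rewrite plus_IZR, mult_IZR.
  replace r with (IZR f + (r - IZR f)) by ring; rewrite Hfrac; field; auto.
Qed.

Lemma cf_frac_bounds k : 0 < cf_rem al k - IZR (cf_a al k) < 1.
Proof.
  unfold cf_a; pose proof (Rfloor_spec (cf_rem al k)) as [Hle Hlt].
  split; [|lra].
  destruct (Rle_lt_or_eq_dec _ _ Hle) as [h|h]; [lra|].
  exfalso; apply (irrational_cf_rem k (Rfloor (cf_rem al k)) 1%Z); [lia|].
  unfold Rdiv; rewrite Rinv_1; lra.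
Qed.

Lemma cf_rem_S_gt1 k : 1 < cf_rem al (S k).
Proof.
  pose proof (cf_frac_bounds k); simpl; fold (cf_a al k).
  rewrite <- Rinv_1; apply Rinv_lt_contravar; lra.
Qed.

Lemma cf_a_S_ge1 k : (1 <= cf_a al (S k))%Z.
Proof.
  pose proof (cf_rem_S_gt1 k); pose proof (cf_frac_bounds (S k)).
  assert (Ha : 0 < IZR (cf_a al (S k))) by lra.
  apply lt_IZR in Ha; lia.
Qed.

Lemma cf_B_bounds k : (0 <= cf_Bprev al k /\ 1 <= cf_B al k /\
  ((1 <= k)%nat -> 1 <= cf_Bprev al k) /\ Z.of_nat k <= cf_B al k)%Z.
Proof.
  induction k as [|k IH]; [cbn; lia|].
  rewrite cf_B_S, cf_Bprev_S; pose proof (cf_a_S_ge1 k); destruct k; nia.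
Qed.

Lemma cf_B_ge1 k : 1 <= IZR (cf_B al k).
Proof. apply IZR_le; apply cf_B_bounds. Qed.

Lemma alpha_mul_cf_den k :
  al * cf_den al k = IZR (cf_A al k) * cf_rem al (S k) + IZR (cf_Aprev al k).
Proof.
  unfold cf_den; induction k as [|k IH].
  - pose proof (cf_frac_bounds 0) as H0; simpl cf_rem in H0.
    cbn; change (Rfloor al) with (cf_a al 0); field; lra.
  - rewrite cf_A_S, cf_Aprev_S, cf_B_S, cf_Bprev_S, !plus_IZR, !mult_IZR.
    pose proof (cf_frac_bounds (S k)).
    set (r := cf_rem al (S k)) in *; set (r' := cf_rem al (S (S k))).
    assert (Hr'def : r' = / (r - IZR (cf_a al (S k)))) by reflexivity.
    assert (Hr : r = IZR (cf_a al (S k)) + / r') by (rewrite Hr'def, Rinv_inv; ring).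
    assert (Hr' : r' <> 0) by (rewrite Hr'def; apply Rinv_neq_0_compat; lra).
    rewrite Hr in IH.
    transitivity (r' * (al * (IZR (cf_B al k) * (IZR (cf_a al (S k)) + / r')
                               + IZR (cf_Bprev al k)))); [field; auto|].
    rewrite IH; field; auto.
Qed.

Lemma cf_den_pos k : 0 < cf_den al k.
Proof.
  unfold cf_den; destruct (cf_B_bounds k) as (H0 & H1 & _).
  apply IZR_le in H0; apply IZR_le in H1; pose proof (cf_rem_S_gt1 k); nra.
Qed.

Lemma cf_err_mul_den k : cf_err al k * cf_den al k = if Nat.even k then 1 else -1.
Proof.
  transitivity (- IZR (cf_A al k * cf_Bprev al k - cf_Aprev al k * cf_B al k)).
  - unfold cf_err; rewrite minus_IZR, !mult_IZR, Rmult_minus_distr_r, Rmult_assoc,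
      alpha_mul_cf_den; unfold cf_den; ring.
  - rewrite cf_det; destruct (Nat.even k); simpl; ring.
Qed.

Lemma fin_cf0_rev_partial_quotients j :
  fin_cf0 (map (cf_a al) (rev (seq 1 j))) = IZR (cf_Bprev al j) / IZR (cf_B al j).
Proof.
  induction j as [|j IH]; [cbn; unfold Rdiv; ring|].
  rewrite seq_S, rev_app_distr, map_app; simpl; rewrite IH.
  replace (1 + j)%nat with (S j) by lia.
  rewrite cf_B_S, cf_Bprev_S, plus_IZR, mult_IZR.
  destruct (cf_B_bounds j) as (H0 & _); apply IZR_le in H0.
  pose proof (cf_B_ge1 j); pose proof (cf_a_S_ge1 j) as Ha; apply IZR_le in Ha.
  field; split; nra.
Qed.

Lemma cf_den_eq_B_mul_lambda j : cf_den al j = IZR (cf_B al j) * cf_lambda al (S j).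
Proof.
  unfold cf_lambda, cf_den; replace (S j - 1)%nat with j by lia.
  rewrite fin_cf0_rev_partial_quotients; pose proof (cf_B_ge1 j); field; lra.
Qed.

End ContinuedFraction.

Lemma Z_unimodular_coords (b0 b1 c0 c1 d p q : Z) :
  (c1 * b0 - c0 * b1 = d)%Z -> (d * d = 1)%Z ->
  exists u v : Z, (u * b0 + v * b1 = q /\ u * c0 + v * c1 = p)%Z.
Proof.
  intros Hdet Hd.
  exists (d * (q * c1 - p * b1))%Z, (d * (p * b0 - q * c0))%Z; split.
  - transitivity (d * (c1 * b0 - c0 * b1) * q)%Z; [ring | rewrite Hdet, Hd; ring].
  - transitivity (d * (c1 * b0 - c0 * b1) * p)%Z; [ring | rewrite Hdet, Hd; ring].
Qed.

Lemma Z_proportional_coprime (b b' c c' d p q : Z) :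
  (c * b' - c' * b = d)%Z -> (d * d = 1)%Z -> (p * b = q * c)%Z ->
  exists e : Z, (q = e * b /\ p = e * c)%Z.
Proof.
  intros Hdet Hd Hpq; exists (d * (p * b' - q * c'))%Z; split; symmetry.
  - transitivity (d * (p * b * b' - q * c' * b))%Z; [ring|].
    rewrite Hpq; transitivity (d * (c * b' - c' * b) * q)%Z; [ring | rewrite Hdet, Hd; ring].
  - transitivity (d * (p * b' * c - q * c * c'))%Z; [ring|].
    rewrite <- Hpq; transitivity (d * (c * b' - c' * b) * p)%Z; [ring | rewrite Hdet, Hd; ring].
Qed.

Lemma Z_combination_opposite_signs (u v b0 b1 : Z) :
  (1 <= b0)%Z -> (0 < u * b0 + v * b1 < b1)%Z -> v <> 0%Z -> (u * v < 0)%Z.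
Proof.
  intros Hb0 Hq Hv.
  destruct (Z.lt_trichotomy v 0) as [Hv'|[Hv'|Hv']]; [|contradiction|].
  - assert (Hu : (0 < u * b0)%Z) by nia; nia.
  - assert (Hu : (u * b0 < 0)%Z) by nia; nia.
Qed.

Lemma Rabs_le_Rabs_add_same_sign a b : 0 <= a * b -> Rabs a <= Rabs (a + b).
Proof.
  intros Hab; destruct (Rle_or_lt 0 a), (Rle_or_lt 0 b).
  - rewrite !Rabs_right; lra.
  - assert (a = 0) as -> by nra; rewrite Rabs_R0; apply Rabs_pos.
  - rewrite !Rabs_left; nra.
  - rewrite !Rabs_left; lra.
Qed.

Section Approximation.
Variable al : R.
Hypothesis Hal : irrational al.

Lemma cf_err_alternate j : cf_err al j * cf_err al (S j) < 0.
Proof.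
  pose proof (cf_err_mul_den al Hal j) as Hj.
  pose proof (cf_err_mul_den al Hal (S j)) as HSj.
  pose proof (cf_den_pos al Hal j); pose proof (cf_den_pos al Hal (S j)).
  rewrite Nat.even_succ, <- Nat.negb_even in HSj.
  assert (Hprod : cf_err al j * cf_err al (S j) * (cf_den al j * cf_den al (S j)) = -1).
  { transitivity ((cf_err al j * cf_den al j) * (cf_err al (S j) * cf_den al (S j))); [ring|].
    rewrite Hj, HSj; destruct (Nat.even j); simpl; ring. }
  assert (Hden : 0 < cf_den al j * cf_den al (S j)) by (apply Rmult_lt_0_compat; auto).
  destruct (Rlt_or_le (cf_err al j * cf_err al (S j)) 0) as [h|h]; [exact h|].
  pose proof (Rmult_le_pos _ _ h (Rlt_le _ _ Hden)); lra.
Qed.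

(* Any q below B_{j+1} is an integer combination u B_j + v B_{j+1} (the convergent
   matrix is unimodular) with u, v of opposite signs, so q alpha - p = u err_j + v err_{j+1}
   is a sum of two terms of the same sign. *)
Lemma cf_best_approx j p q : (0 < q < cf_B al (S j))%Z ->
  Rabs (cf_err al j) <= Rabs (IZR q * al - IZR p).
Proof.
  intros Hq.
  assert (Hdet := cf_det al (S j)); rewrite cf_Aprev_S, cf_Bprev_S in Hdet.
  set (d := if Nat.even (S j) then (-1)%Z else 1%Z) in Hdet.
  assert (Hd : (d * d = 1)%Z) by (unfold d; destruct (Nat.even (S j)); reflexivity).
  destruct (Z_unimodular_coords _ _ _ _ _ p q Hdet Hd) as (u & v & Hqu & Hpu).
  assert (Hsplit : IZR q * al - IZR p = IZR u * cf_err al j + IZR v * cf_err al (S j)).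
  { unfold cf_err; rewrite <- Hqu, <- Hpu, !plus_IZR, !mult_IZR; ring. }
  rewrite Hsplit.
  assert (Hb0 : (1 <= cf_B al j)%Z) by apply (cf_B_bounds al Hal).
  assert (Hu1 : forall z, z <> 0%Z -> 1 <= Rabs (IZR z)).
  { intros z Hz; rewrite <- abs_IZR; apply IZR_le; lia. }
  destruct (Z.eq_dec v 0) as [-> | Hv].
  - rewrite Rmult_0_l, Rplus_0_r, Rabs_mult.
    assert (Hu : u <> 0%Z) by nia.
    rewrite <- (Rmult_1_l (Rabs (cf_err al j))) at 1.
    apply Rmult_le_compat_r; [apply Rabs_pos | exact (Hu1 u Hu)].
  - assert (Huv := Z_combination_opposite_signs u v _ (cf_B al (S j)) Hb0 ltac:(lia) Hv).
    assert (Hu : u <> 0%Z) by nia.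
    apply IZR_lt in Huv; rewrite mult_IZR in Huv.
    pose proof (cf_err_alternate j).
    eapply Rle_trans; [|apply Rabs_le_Rabs_add_same_sign; nra].
    rewrite Rabs_mult, <- (Rmult_1_l (Rabs (cf_err al j))) at 1.
    apply Rmult_le_compat_r; [apply Rabs_pos | exact (Hu1 u Hu)].
Qed.

Lemma cf_B_bracket q : (1 <= q)%Z -> exists j, (cf_B al j <= q < cf_B al (S j))%Z.
Proof.
  intros Hq.
  assert (Hbelow : forall m, (q < cf_B al (S m))%Z ->
                   exists j, (cf_B al j <= q < cf_B al (S j))%Z).
  { induction m as [|m IH]; intros Hm.
    - exists O; change (cf_B al 0) with 1%Z; lia.
    - destruct (Z_lt_le_dec q (cf_B al (S m))); [apply IH; auto | exists (S m); lia]. }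
  apply (Hbelow (Z.to_nat q)).
  destruct (cf_B_bounds al Hal (S (Z.to_nat q))) as (_ & _ & _ & Hk); lia.
Qed.

(* If p/q beats the bound of Legendre's theorem, best approximation forces
   |p B_j - q A_j| = |q err_j - B_j (q alpha - p)| < 1. *)
Lemma cf_proportional_of_close j p q :
  (1 <= q)%Z -> (cf_B al j <= q < cf_B al (S j))%Z ->
  Rabs (IZR q * al - IZR p) < / (2 * IZR q) ->
  (p * cf_B al j = q * cf_A al j)%Z.
Proof.
  intros Hq Hj Hclose.
  pose proof (cf_best_approx j p q ltac:(lia)) as Hbest.
  assert (HqR : 1 <= IZR q) by (apply IZR_le; lia).
  assert (HbR : IZR (cf_B al j) <= IZR q) by (apply IZR_le; lia).
  pose proof (cf_B_ge1 al Hal j).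
  set (eps := IZR q * al - IZR p) in *.
  destruct (Z.eq_dec (p * cf_B al j - q * cf_A al j) 0) as [h|h]; [lia|exfalso].
  assert (Hint : 1 <= Rabs (IZR (p * cf_B al j - q * cf_A al j)))
    by (rewrite <- abs_IZR; apply IZR_le; lia).
  replace (IZR (p * cf_B al j - q * cf_A al j))
    with (IZR q * cf_err al j - IZR (cf_B al j) * eps) in Hint
    by (unfold eps, cf_err; rewrite minus_IZR, !mult_IZR; ring).
  pose proof (Rabs_triang (IZR q * cf_err al j) (- (IZR (cf_B al j) * eps))).
  rewrite Rabs_Ropp, !Rabs_mult, (Rabs_right (IZR q)), (Rabs_right (IZR (cf_B al j))) in * by lra.
  assert (Hqe : IZR q * Rabs eps < / 2).
  { replace (/ 2) with (IZR q * / (2 * IZR q)) by (field; lra).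
    apply Rmult_lt_compat_l; lra. }
  pose proof (Rabs_pos eps); unfold Rminus in Hint; nra.
Qed.

(* One-sided form of Legendre's theorem, with the exact error. *)
Lemma cf_legendre p q : (1 <= q)%Z ->
  0 < IZR p - IZR q * al < / (2 * IZR q) ->
  exists k c, (1 <= c)%Z /\ q = (c * cf_B al (2 * k + 1))%Z /\
    IZR p - IZR q * al = IZR c / cf_den al (2 * k + 1).
Proof.
  intros Hq Hclose.
  destruct (cf_B_bracket q Hq) as [j Hj].
  assert (Hpq := cf_proportional_of_close j p q Hq Hj).
  rewrite Rabs_left in Hpq by lra.
  specialize (Hpq ltac:(lra)).
  assert (Hdet := cf_det al j).
  set (d := if Nat.even j then (-1)%Z else 1%Z) in Hdet.
  assert (Hd : (d * d = 1)%Z) by (unfold d; destruct (Nat.even j); reflexivity).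
  destruct (Z_proportional_coprime _ _ _ _ _ _ _ Hdet Hd Hpq) as (c & Hqc & Hpc).
  assert (Hc : (1 <= c)%Z) by (destruct (cf_B_bounds al Hal j) as (_ & HB & _); nia).
  assert (HcR : 1 <= IZR c) by (apply IZR_le; lia).
  assert (Herr : IZR p - IZR q * al = - (IZR c * cf_err al j)).
  { unfold cf_err; rewrite Hqc, Hpc, !mult_IZR; ring. }
  pose proof (cf_err_mul_den al Hal j) as Hed; pose proof (cf_den_pos al Hal j).
  destruct (Nat.even j) eqn:Heven; [nra|].
  assert (Hodd : Nat.odd j = true) by (rewrite <- Nat.negb_even, Heven; reflexivity).
  apply Nat.odd_spec in Hodd as [k ->].
  exists k, c; split; [exact Hc | split; [exact Hqc|]].
  rewrite Herr; apply (Rmult_eq_reg_r (cf_den al (2 * k + 1))); [|lra].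
  unfold Rdiv; rewrite Rmult_assoc, Rinv_l by lra; nra.
Qed.

End Approximation.

Lemma irrational_IZR_div (r : Z) x : r <> 0%Z -> irrational x -> irrational (IZR r / x).
Proof.
  intros Hr Hx p q Hq Hrx.
  assert (Hx0 : x <> 0) by (intros ->; apply (Hx 0%Z 1%Z); [lia | field]).
  assert (HrR : IZR r <> 0) by (apply not_0_IZR; auto).
  assert (HqR : IZR q <> 0) by (apply not_0_IZR; auto).
  assert (HpR : IZR p <> 0).
  { intros Hp; rewrite Hp, Rdiv_0_l in Hrx.
    apply (Rmult_integral_contrapositive_currified _ _ HrR (Rinv_neq_0_compat _ Hx0)), Hrx. }
  apply (Hx (r * q)%Z p); [intros ->; apply HpR; reflexivity|].
  rewrite mult_IZR.
  replace x with (IZR r / (IZR r / x)) by (field; auto).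
  rewrite Hrx; field; auto.
Qed.

Lemma lambda_gt_of_error_bound c b lam L :
  0 < c -> 0 < b -> 0 < b * lam -> 0 < L ->
  c / (b * lam) < L / (6 * (c * b)) -> 6 * c ^ 2 / L < lam.
Proof.
  intros Hc Hb Hblam HL Hbound.
  assert (Hlam : 0 < lam) by nra.
  apply (Rmult_lt_compat_r (6 * (c * b) * (b * lam))) in Hbound; [|apply Rmult_lt_0_compat; [nra | exact Hblam]].
  replace (c / (b * lam) * (6 * (c * b) * (b * lam))) with (6 * c ^ 2 * b) in Hbound
    by (field; lra).
  replace (L / (6 * (c * b)) * (6 * (c * b) * (b * lam))) with (L * b * lam) in Hbound
    by (field; lra).
  apply (Rmult_lt_reg_r (L * b)); [nra|].
  replace (6 * c ^ 2 / L * (L * b)) with (6 * c ^ 2 * b) by (field; lra).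
  lra.
Qed.

Theorem mainTheorem12 (theta : R) (n : nat) :
  1 < theta -> theta < exp 3 -> irrational (ln theta) ->
  in_A theta n ->
  exists c k : nat, (1 <= c)%nat /\ (1 <= k)%nat /\
    Z.of_nat n = (Z.of_nat c * cf_B (2 / ln theta) (2 * k - 1))%Z /\
    cf_lambda (2 / ln theta) (2 * k) > 6 * (INR c) ^ 2 / ln theta.
Proof.
  intros Htheta Htheta3 Hirr HA.
  assert (HL : 0 < ln theta) by (rewrite <- ln_1; apply ln_increasing; lra).
  assert (HL3 : ln theta < 3) by (rewrite <- (ln_exp 3); apply ln_increasing; lra).
  destruct (in_A_near_odd_integer theta n Htheta HA) as [m Hm].
  destruct HA as [Hn _].
  assert (HnR : 1 <= INR n) by (apply (le_INR 1); lia).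
  set (L := ln theta) in *; set (al := 2 / L) in *.
  assert (Hal : irrational al) by exact (irrational_IZR_div 2 L ltac:(lia) Hirr).
  rewrite INR_IZR_INZ in Hm, HnR.
  destruct (cf_legendre al Hal (2 * m + 1) (Z.of_nat n)) as (k & c & Hc & Hnc & Herr).
  { lia. }
  { split; [lra|].
    apply (Rlt_le_trans _ (L / (6 * IZR (Z.of_nat n)))); [lra|].
    replace (/ (2 * IZR (Z.of_nat n))) with (3 / (6 * IZR (Z.of_nat n))) by (field; lra).
    apply Rmult_le_compat_r; [apply Rlt_le, Rinv_0_lt_compat |]; lra. }
  rewrite cf_den_eq_B_mul_lambda in Herr by exact Hal.
  exists (Z.to_nat c), (S k).
  replace (2 * S k - 1)%nat with (2 * k + 1)%nat by lia.
  replace (2 * S k)%nat with (S (2 * k + 1)) by lia.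
  rewrite INR_IZR_INZ, Z2Nat.id by lia.
  split; [lia | split; [lia | split; [exact Hnc|]]].
  apply (lambda_gt_of_error_bound _ (IZR (cf_B al (2 * k + 1))) _ L); auto.
  - apply IZR_lt; lia.
  - pose proof (cf_B_ge1 al Hal (2 * k + 1)); lra.
  - rewrite <- cf_den_eq_B_mul_lambda by exact Hal; apply cf_den_pos, Hal.
  - rewrite <- mult_IZR, <- Hnc, <- Herr; lra.
Qed.
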